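(* Let $n\ge 2$ and fix positive integers $d_1,\dots,d_n$. Consider minimizing $(f_n-f_1)^2$ over real vectors $(f_1,\dots,f_n)$ subject to \[ \sum_{i=1}^n f_i d_i=0,\qquad \sum_{i=1}^n f_i^2 d_i=1, \] and $f_1\le f_k\le f_n$ for all $k$. If $(f_1,\dots,f_n)$ is a minimizer, then for every $k$ one has $f_k=f_1$ or $f_k=f_n$. *)

(* Real numbers are modelled by an arbitrary real closed
   field R (the statement is first-order, so this is a faithful
   generalisation of the case R = the reals). *)
From HB Require Import structures.
From mathcomp Require Import all_boot all_order all_algebra.
Set Implicit Arguments. Unset Strict Implicit. Unset Printing Implicit Defensive.
Import Order.TTheory GRing.Theory Num.Theory.
Local Open Scope ring_scope.

(* Vectors (f_1,...,f_n) are functions nat -> R; only indices 1..n matter.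
   Weights d_1,...,d_n are natural numbers (assumed positive in the theorem). *)

Definition feasible (R : rcfType) (n : nat) (d : nat -> nat) (f : nat -> R) : Prop :=
  [/\ \sum_(1 <= i < n.+1) f i * (d i)%:R = 0,
      \sum_(1 <= i < n.+1) f i ^+ 2 * (d i)%:R = 1
    & forall k : nat, (1 <= k <= n)%N -> f 1%N <= f k <= f n].

Definition objective (R : rcfType) (n : nat) (f : nat -> R) : R :=
  (f n - f 1%N) ^+ 2.

Definition is_minimizer (R : rcfType) (n : nat) (d : nat -> nat) (f : nat -> R) : Prop :=
  feasible n d f /\ forall g : nat -> R, feasible n d g -> objective n f <= objective n g.

From HB Require Import structures.
From mathcomp Require Import all_boot all_order all_algebra.
From mathcomp Require Import ring lra.
Set Implicit Arguments. Unset Strict Implicit. Unset Printing Implicit Defensive.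
Import Order.TTheory GRing.Theory Num.Theory.
Local Open Scope ring_scope.

(* Suppose f_1 < f_k < f_n.  Moving f_k to the endpoint f_n (if f_k >= 0) or
   f_1 (if f_k < 0) keeps f_1 and f_n but strictly increases the weighted
   variance.  Centering and rescaling to unit variance then gives a feasible
   vector whose spread f_n - f_1, hence whose objective, is strictly smaller. *)

Lemma big_eq_except (R : zmodType) (I : eqType) (r : seq I) (k : I)
    (F G : I -> R) :
  uniq r -> k \in r -> (forall i, i != k -> F i = G i) ->
  \sum_(i <- r) F i = \sum_(i <- r) G i + (F k - G k).
Proof.
move=> r_uniq kr FG; rewrite !(bigD1_seq k) //= (eq_bigr G) => [|i /FG //].
by rewrite [RHS]addrC addrA subrK.
Qed.

Lemma leq_add_sum_nat (n j k : nat) (d : nat -> nat) :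
  (1 <= j <= n)%N -> (1 <= k <= n)%N -> j != k ->
  (d j + d k <= \sum_(1 <= i < n.+1) d i)%N.
Proof.
move=> hj hk jk; have range_uniq : uniq (index_iota 1 n.+1) by exact: iota_uniq.
have mem_range i : (1 <= i <= n)%N -> i \in index_iota 1 n.+1.
  by rewrite mem_index_iota ltnS.
rewrite (bigD1_seq j) ?mem_range //= leq_add2l big_mkcond.
by rewrite (bigD1_seq k) ?mem_range //= eq_sym jk leq_addr.
Qed.

Section Standardization.
Variables (R : rcfType) (n : nat) (d : nat -> nat).

Definition total_weight : R := \sum_(1 <= i < n.+1) (d i)%:R.

Definition wmean (h : nat -> R) : R :=
  (\sum_(1 <= i < n.+1) h i * (d i)%:R) / total_weight.

Definition wvar (h : nat -> R) : R :=
  \sum_(1 <= i < n.+1) h i ^+ 2 * (d i)%:R - total_weight * wmean h ^+ 2.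

Definition standardize (h : nat -> R) (i : nat) : R :=
  (h i - wmean h) / Num.sqrt (wvar h).

Variable h : nat -> R.
Hypothesis total_weight_neq0 : total_weight != 0.

Lemma sum_centered : \sum_(1 <= i < n.+1) (h i - wmean h) * (d i)%:R = 0.
Proof.
under eq_bigr do rewrite mulrBl.
by rewrite sumrB -mulr_sumr /wmean -/total_weight; field.
Qed.

Lemma sum_centered_sqr :
  \sum_(1 <= i < n.+1) (h i - wmean h) ^+ 2 * (d i)%:R = wvar h.
Proof.
set m := wmean h.
rewrite (eq_bigr (fun i => h i ^+ 2 * (d i)%:R - 2 * m * (h i * (d i)%:R)
                           + m ^+ 2 * (d i)%:R)) => [|i _]; last by ring.
rewrite big_split sumrB /= -!mulr_sumr -/total_weight /wvar -/m.
by rewrite /m /wmean -/total_weight; field.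
Qed.

Hypothesis wvar_gt0 : 0 < wvar h.

Lemma sqrt_wvar_gt0 : 0 < Num.sqrt (wvar h).
Proof. by rewrite sqrtr_gt0. Qed.

Lemma sqr_sqrt_wvar : Num.sqrt (wvar h) ^+ 2 = wvar h.
Proof. by rewrite sqr_sqrtr // ltW. Qed.

Lemma feasible_standardize :
  (forall k, (1 <= k <= n)%N -> h 1%N <= h k <= h n) ->
  feasible n d (standardize h).
Proof.
move=> h_ord; have s_neq0 := gt_eqF sqrt_wvar_gt0; split.
- under eq_bigr do rewrite mulrAC.
  by rewrite -mulr_suml sum_centered mul0r.
- under eq_bigr do rewrite expr_div_n mulrAC.
  by rewrite -mulr_suml sum_centered_sqr sqr_sqrt_wvar divff // gt_eqF.
- move=> k hk; have /andP[h1k hkn] := h_ord k hk.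
  by rewrite !ler_pM2r ?invr_gt0 ?sqrt_wvar_gt0 // !lerD2r h1k hkn.
Qed.

Lemma objective_standardize : objective n (standardize h) = objective n h / wvar h.
Proof.
by rewrite /objective /standardize -mulrBl opprB addrA subrK expr_div_n sqr_sqrt_wvar.
Qed.

End Standardization.

Lemma objective_standardize_lt (R : rcfType) (n : nat) (d : nat -> nat)
    (h : nat -> R) :
  0 < objective n h -> 1 < wvar n d h ->
  objective n (standardize n d h) < objective n h.
Proof.
move=> obj_gt0 var_gt1; have var_gt0 : 0 < wvar n d h by apply: lt_trans var_gt1.
by rewrite objective_standardize // ltr_pdivrMr // ltr_pMr.
Qed.

Lemma weight_lt_total_weight (R : rcfType) (n : nat) (d : nat -> nat) (k : nat) :
  (forall i, (1 <= i <= n)%N -> (0 < d i)%N) -> (1 <= k <= n)%N -> 1%N != k ->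
  (0 : R) < (d k)%:R < total_weight R n d.
Proof.
move=> d_gt0 hk k1; have h1n : (1 <= 1 <= n)%N by case/andP: hk => /leq_trans h1 /h1.
rewrite ltr0n d_gt0 //= /total_weight -natr_sum ltr_nat.
by rewrite (leq_trans _ (leq_add_sum_nat d h1n hk k1)) // -addn1 addnC leq_add2r d_gt0.
Qed.

Section MoveInteriorValue.
Variables (R : rcfType) (n : nat) (f : nat -> R) (k : nat) (c : R).
Hypotheses (k1 : 1%N != k) (kn : n != k).

Lemma objective_eta_with : objective n [eta f with k |-> c] = objective n f.
Proof. by rewrite /objective /= (negbTE k1) (negbTE kn). Qed.

Lemma eta_with_between :
  (forall j, (1 <= j <= n)%N -> f 1%N <= f j <= f n) -> f 1%N <= c <= f n ->
  forall j, (1 <= j <= n)%N ->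
  [eta f with k |-> c] 1%N <= [eta f with k |-> c] j <= [eta f with k |-> c] n.
Proof.
move=> f_ord c_between j; rewrite /= (negbTE k1) (negbTE kn).
by case: eqP => [_|_ /f_ord //].
Qed.

End MoveInteriorValue.

Lemma wvar_update (R : rcfType) (n : nat) (d : nat -> nat) (f : nat -> R)
    (k : nat) (c : R) :
  feasible n d f -> (1 <= k <= n)%N -> total_weight R n d != 0 ->
  wvar n d [eta f with k |-> c] =
  1 + (d k)%:R * (c - f k)
      * (c + f k - (d k)%:R * (c - f k) / total_weight R n d).
Proof.
move=> [sum_f sum_f2 _] hk D_neq0.
have sum_update (u : R -> R) :
    \sum_(1 <= i < n.+1) u ([eta f with k |-> c] i) * (d i)%:R =
    \sum_(1 <= i < n.+1) u (f i) * (d i)%:R + (u c - u (f k)) * (d k)%:R.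
  rewrite (big_eq_except (k := k) (G := fun i => u (f i) * (d i)%:R)).
  - by rewrite /= eqxx mulrBl.
  - exact: iota_uniq.
  - by rewrite mem_index_iota ltnS.
  - by move=> i /= /negbTE ->.
rewrite /wvar /wmean (sum_update id) (sum_update (fun x => x ^+ 2)) /= sum_f sum_f2.
by field.
Qed.

Lemma exists_variance_increasing_move (R : realFieldType) (a x b w D : R) :
  a < x < b -> 0 < w < D ->
  exists2 c, a <= c <= b & 0 < w * (c - x) * (c + x - w * (c - x) / D).
Proof.
move=> /andP[ax xb] /andP[w_gt0 wD]; have D_gt0 : 0 < D by lra.
have [x_ge0|x_lt0] := lerP 0 x.
- exists b; first by lra.
  have shrink : w * (b - x) / D < b - x by rewrite ltr_pdivrMr //; nra.
  by rewrite mulr_gt0 ?mulr_gt0 //; lra.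
- exists a; first by lra.
  have shrink : a - x < w * (a - x) / D by rewrite ltr_pdivlMr //; nra.
  by rewrite -mulrA pmulr_lgt0 //; nra.
Qed.

Theorem proposition2p1 (R : rcfType) (n : nat) (hn : (2 <= n)%N)
  (d : nat -> nat) (hd : forall i : nat, (1 <= i <= n)%N -> (0 < d i)%N)
  (f : nat -> R) :
  is_minimizer n d f ->
  forall k : nat, (1 <= k <= n)%N -> f k = f 1%N \/ f k = f n.
Proof.
move=> [f_feas f_min] k hk.
have [->|f1k] := eqVneq (f k) (f 1%N); first by left.
have [->|fkn] := eqVneq (f k) (f n); first by right.
exfalso; have [_ _ f_ord] := f_feas.
have k1 : 1%N != k by apply: contra_neq f1k => <-.
have kn : n != k by apply: contra_neq fkn => <-.
have fk_between : f 1%N < f k < f n.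
  by have /andP[? ?] := f_ord k hk; rewrite !lt_neqAle eq_sym f1k fkn; apply/andP.
have wD : (0 : R) < (d k)%:R < total_weight R n d by exact: weight_lt_total_weight.
have D_neq0 : total_weight R n d != 0.
  by case/andP: wD => w_gt0 /(lt_trans w_gt0) /gt_eqF ->.
have [c c_between var_gain] := exists_variance_increasing_move fk_between wD.
have var_gt1 : 1 < wvar n d [eta f with k |-> c] by rewrite wvar_update // ltrDl.
have obj_gt0 : 0 < objective n [eta f with k |-> c].
  rewrite objective_eta_with //; case/andP: fk_between => /lt_trans f1_lt /f1_lt f1n.
  by rewrite exprn_gt0 // subr_gt0.
have g_feas := feasible_standardize D_neq0 (lt_trans ltr01 var_gt1)
  (eta_with_between k1 kn f_ord c_between).
have := objective_standardize_lt obj_gt0 var_gt1.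
by rewrite objective_eta_with // ltNge (f_min _ g_feas).
Qed.
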